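(* In the adjacency array model, any bounded-error quantum algorithm that decides whether an $n$-vertex undirected graph is bipartite requires $\Omega(n)$ queries, and any bounded-error quantum algorithm that decides whether an $n$-vertex undirected graph contains a cycle requires $\Omega(n)$ queries.
   Context: Adjacency array model: the degrees $d_1,\dots,d_n$ of the vertices are given for free, and for each vertex $i$ there is an oracle for an injective array $f_i:[d_i]\to[n]$ listing its neighbours in an arbitrary fixed order; query complexity counts only queries to the arrays $f_i$ (which may be made in superposition). Bounded error means success probability at least $2/3$ on every input. *)

From mathcomp Require Import all_boot all_algebra.
From mathcomp Require Import complex.
From mathcomp Require Import Rstruct.
Set Implicit Arguments. Unset Strict Implicit. Unset Printing Implicit Defensive.
Import GRing.Theory Num.Theory.
Local Open Scope ring_scope.

Notation C := (complex Rdefinitions.R).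

(* deg i = d_i ; nbr i j = f_i(j) for j < d_i (values for j >= d_i are irrelevant).
   Array indices are 0-based: [d_i] = {0,...,d_i-1}. *)
Record adj_array (n : nat) := AdjArray {
  deg : 'I_n -> nat;
  nbr : 'I_n -> 'I_n -> 'I_n }.

Definition adj n (A : adj_array n) : rel 'I_n :=
  fun u v => [exists j : 'I_n, (j < deg A u)%N && (nbr A u j == v)].

Definition valid_array n (A : adj_array n) : Prop :=
  [/\ forall u, (deg A u <= n)%N,
      forall u (j k : 'I_n), (j < deg A u)%N -> (k < deg A u)%N ->
        nbr A u j = nbr A u k -> j = k,
      forall u v, adj A u v -> adj A v u &
      forall u, ~~ adj A u u].

Definition bipartite n (A : adj_array n) : Prop :=
  exists col : 'I_n -> bool, forall u v, adj A u v -> col u != col v.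

Definition has_cycle n (A : adj_array n) : Prop :=
  exists s : seq 'I_n, [/\ (3 <= size s)%N, uniq s & cycle (adj A) s].

Lemma ord_pos n (a : 'I_n) : (0 < n)%N.
Proof. by case: a => k; case: n. Qed.

Definition addI n (a b : 'I_n) : 'I_n := Ordinal (ltn_pmod (a + b) (ord_pos a)).

(* basis states: (vertex i, array index j, answer register b, workspace w) *)
Definition qbasis (n m : nat) := ('I_n * 'I_n * 'I_n * 'I_m)%type.

Definition qstate (S : finType) := S -> C.
Definition qop (S : finType) := S -> S -> C.

Definition qapply (S : finType) (U : qop S) (v : qstate S) : qstate S :=
  fun s => \sum_(t : S) U s t * v t.

Definition unitary (S : finType) (U : qop S) : Prop :=
  forall s t : S, \sum_(u : S) (U u s)^* * U u t = (s == t)%:R.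

Definition unit_vector (S : finType) (v : qstate S) : Prop :=
  \sum_(s : S) `|v s| ^+ 2 = 1.

Definition qstep n m (A : adj_array n) (s : qbasis n m) : qbasis n m :=
  let: (i, j, b, w) := s in
  if (j < deg A i)%N then (i, j, addI b (nbr A i j), w) else s.

Definition oracle n m (A : adj_array n) : qop (qbasis n m) :=
  fun s t => (s == qstep A t)%:R.

(* Since the degrees are given for
   free, everything may depend on the degree sequence d. *)
Record qalg (n T m : nat) := QAlg {
  init : ('I_n -> nat) -> qstate (qbasis n m);
  U : ('I_n -> nat) -> nat -> qop (qbasis n m);
  acc : ('I_n -> nat) -> pred (qbasis n m) }.

Definition qalg_wf n T m (Q : qalg n T m) : Prop :=
  (forall d, unit_vector (init Q d)) /\
  (forall d k, (k <= T)%N -> unitary (U Q d k)).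

Fixpoint run n T m (Q : qalg n T m) (A : adj_array n) (k : nat) : qstate (qbasis n m) :=
  match k with
  | 0 => qapply (U Q (deg A) 0) (init Q (deg A))
  | k'.+1 => qapply (U Q (deg A) k) (qapply (@oracle n m A) (run Q A k'))
  end.

Definition acc_prob n T m (Q : qalg n T m) (A : adj_array n) : C :=
  \sum_(s | acc Q (deg A) s) `|run Q A T s| ^+ 2.

Definition decides n T m (Q : qalg n T m) (P : adj_array n -> Prop) : Prop :=
  forall A : adj_array n, valid_array A ->
    (P A -> 2%:R / 3%:R <= acc_prob Q A) /\
    (~ P A -> acc_prob Q A <= 1 / 3%:R).

Definition omega_n_lower_bound (P : forall n, adj_array n -> Prop) : Prop :=
  exists k N : nat, forall n : nat, (N <= n)%N ->
    forall (T m : nat) (Q : qalg n T m), qalg_wf Q -> decides Q (@P n) ->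
      (n <= k * T)%N.

(* Adversary (hybrid) argument.  Let x be the path 0 - 1 - ... - n' and y the
   disjoint union of the odd cycle 1 - 2 - ... - L - 1 and the path
   0 - (L+1) - ... - n'.  For 1 <= k < L, exchanging the vertex blocks [1, k]
   and [L+1, L+k] turns y into an array that agrees with x except at the four
   vertices k, k+1, k+L, k+L+1, while x is bipartite and acyclic and y is
   neither.  One query moves the inner product of the states computed on two
   such inputs by at most the weight both states put on the vertices where the
   arrays differ, whereas bounded error forces the final inner product to be
   1/36-far from 1.  Averaging over all relabellings of the vertices and all k,
   every vertex is one of the four for at most 4 values of k, so a query gains
   at most 8 on average, and L - 1 <= 288 T. *)

From mathcomp Require Import all_boot all_order all_algebra all_fingroup.
From mathcomp Require Import complex Rstruct ring zify.
From Stdlib Require Import FunctionalExtensionality.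

Set Implicit Arguments. Unset Strict Implicit. Unset Printing Implicit Defensive.
Import Order.TTheory GRing.Theory Num.Theory.

Section InnerProduct.
Variable S : finType.
Local Open Scope ring_scope.
Implicit Types (v w phi psi : qstate S).

Definition qdot v w : C := \sum_s (v s)^* * w s.

Lemma qdotC v w : qdot w v = (qdot v w)^*.
Proof.
rewrite /qdot rmorph_sum; apply: eq_bigr => s _.
by rewrite rmorphM /= conjCK mulrC.
Qed.

Lemma qdotvv v : qdot v v = \sum_s `|v s| ^+ 2.
Proof. by apply: eq_bigr => s _; rewrite normCKC. Qed.

Lemma qdot_unitary (W : qop S) v w :
  unitary W -> qdot (qapply W v) (qapply W w) = qdot v w.
Proof.
move=> W_unitary; rewrite /qdot /qapply.
under eq_bigr => s _ do rewrite rmorph_sum /= mulr_suml.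
rewrite exchange_big; apply: eq_bigr => t _ /=.
under eq_bigr => s _ do rewrite mulr_sumr.
rewrite exchange_big /=.
transitivity (\sum_u (v t)^* * w u * (t == u)%:R).
  apply: eq_bigr => u _; rewrite -W_unitary mulr_sumr; apply: eq_bigr => s _.
  by rewrite rmorphM /=; ring.
rewrite (bigD1 t) //= eqxx mulr1 big1 ?addr0 // => u /negbTE.
by rewrite eq_sym => ->; rewrite mulr0.
Qed.

Section Permutation.
Variables (f : S -> S) (f_inj : injective f).

Lemma qapply_perm v s : qapply (fun s t => (s == f t)%:R) v s = v (invF f_inj s).
Proof.
rewrite /qapply (bigD1 (invF f_inj s)) //= f_invF eqxx mul1r big1 ?addr0 // => t.
move=> t_neq; case: eqP => [s_ft|_]; last by rewrite mul0r.
by move: t_neq; rewrite s_ft invF_f eqxx.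
Qed.

Lemma unitary_perm : unitary (fun s t => (s == f t)%:R).
Proof.
move=> s t; rewrite (bigD1 (f s)) //= eqxx conjC_nat mul1r big1 ?addr0.
  by rewrite (inj_eq f_inj).
by move=> u /negbTE ->; rewrite conjC_nat mul0r.
Qed.

End Permutation.

Lemma norm_mulB_le (a b c : C) :
  `|a| * `|b - c| *+ 2 <= `|a| ^+ 2 *+ 2 + `|b| ^+ 2 + `|c| ^+ 2.
Proof.
have amgm (x y : C) : `|x| * `|y| *+ 2 <= `|x| ^+ 2 + `|y| ^+ 2.
  exact: (real_leif_mean_square_scaled (normr_real x) (normr_real y)).1.
apply: (le_trans (y := (`|a| * `|b| + `|a| * `|c|) *+ 2)).
  by rewrite ler_pMn2r // -mulrDr ler_wpM2l ?ler_normB.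
rewrite mulrnDl; apply: le_trans (lerD (amgm a b) (amgm a c)) _.
by rewrite -subr_ge0 (_ : _ - _ = 0) //; ring.
Qed.

Lemma qdot_shift_le (h : S -> S) (P : pred S) phi psi :
    injective h -> (forall t, P (h t) = P t) -> (forall t, ~~ P t -> h t = t) ->
  `|qdot phi (psi \o h) - qdot phi psi|
    <= \sum_(t | P t) (`|phi t| ^+ 2 + `|psi t| ^+ 2).
Proof.
move=> h_inj Ph h_id.
have diffE : qdot phi (psi \o h) - qdot phi psi
             = \sum_(t | P t) (phi t)^* * (psi (h t) - psi t).
  rewrite /qdot -sumrB; under eq_bigr do rewrite -mulrBr.
  rewrite (bigID P) /= [X in _ + X]big1 ?addr0 // => t /h_id ->.
  by rewrite subrr mulr0.
have psihE : \sum_(t | P t) `|psi (h t)| ^+ 2 = \sum_(t | P t) `|psi t| ^+ 2.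
  by rewrite [RHS](reindex_inj h_inj); apply: eq_bigl => t; rewrite Ph.
rewrite diffE -(ler_pMn2r (_ : 0 < 2)%N) //.
apply: le_trans (ler_wMn2r 2 (ler_norm_sum _ _ _)) _.
rewrite -!sumrMnl; apply: (le_trans (y := \sum_(t | P t)
    (`|phi t| ^+ 2 *+ 2 + `|psi (h t)| ^+ 2 + `|psi t| ^+ 2))).
  by apply: ler_sum => t _; rewrite normrM norm_conjC norm_mulB_le.
rewrite !big_split /= psihE.
by rewrite -subr_ge0 (_ : _ - _ = 0) //; ring.
Qed.

Lemma sqr_dist_le v w : qdot v v = 1 -> qdot w w = 1 ->
  \sum_s `|v s - w s| ^+ 2 <= `|1 - qdot v w| *+ 2.
Proof.
move=> v1 w1.
have -> : \sum_s `|v s - w s| ^+ 2 = (1 - qdot v w) + (1 - qdot v w)^*.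
  have -> : \sum_s `|v s - w s| ^+ 2 = qdot v v - qdot v w - qdot w v + qdot w w.
    rewrite /qdot -!sumrB -big_split /=; apply: eq_bigr => s _.
    by rewrite normCKC rmorphB /=; ring.
  by rewrite v1 w1 rmorphB /= rmorph1 -qdotC; ring.
have := (leif_Re_Creal (1 - qdot v w)).1; rewrite ReE.
by rewrite ler_pdivrMr ?ltr0n // mulr_natr.
Qed.

Lemma acc_le_dist (P : pred S) v w :
  (\sum_(s | P s) `|v s| ^+ 2) *+ 3
    <= (\sum_s `|v s - w s| ^+ 2) *+ 12 + (\sum_(s | P s) `|w s| ^+ 2) *+ 4.
Proof.
apply: (le_trans (y := \sum_(s | P s) (`|v s - w s| ^+ 2 *+ 12 + `|w s| ^+ 2 *+ 4))).
  rewrite -sumrMnl; apply: ler_sum => s _.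
  set a := `|v s - w s|; set b := `|w s|.
  have [ar br] : a \is Num.real /\ b \is Num.real by rewrite !normr_real.
  have : `|v s| ^+ 2 <= (a + b) ^+ 2.
    rewrite lerXn2r ?nnegrE ?addr_ge0 ?normr_ge0 //.
    by apply: le_trans (ler_normD _ _); rewrite subrK.
  move/(ler_wMn2r 3)/le_trans; apply; rewrite -subr_ge0.
  have -> : a ^+ 2 *+ 12 + b ^+ 2 *+ 4 - (a + b) ^+ 2 *+ 3 = (a *+ 3 - b) ^+ 2 by ring.
  by rewrite -real_normK ?exprn_ge0 // rpredB // rpredMn.
rewrite big_split /= !sumrMnl lerD2r ler_pMn2r //.
rewrite [X in X <= _]big_mkcond /=; apply: ler_sum => s _.
by case: (P s) => //; rewrite exprn_ge0.
Qed.

Lemma distinguish_qdot (P : pred S) v w : qdot v v = 1 -> qdot w w = 1 ->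
    2%:R / 3%:R <= \sum_(s | P s) `|v s| ^+ 2 ->
    \sum_(s | P s) `|w s| ^+ 2 <= 1 / 3%:R ->
  1 <= `|1 - qdot v w| *+ 36.
Proof.
move=> v1 w1; set pv := \sum_(s | P s) _; set pw := \sum_(s | P s) _ => pv_ge pw_le.
set D := \sum_s `|v s - w s| ^+ 2; set d := `|1 - qdot v w|.
have e1 : 0 <= pv *+ 3 - 2%:R by rewrite subr_ge0 -[pv *+ 3]mulr_natr -ler_pdivrMr ?ltr0n.
have e2 : 0 <= 1 - pw *+ 3 by rewrite subr_ge0 -[pw *+ 3]mulr_natr -ler_pdivlMr ?ltr0n.
have e3 : 0 <= D *+ 12 + pw *+ 4 - pv *+ 3 by rewrite subr_ge0 acc_le_dist.
have e4 : 0 <= d *+ 2 - D by rewrite subr_ge0 sqr_dist_le.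
have key : (d *+ 36 - 1) *+ 2 = (d *+ 2 - D) *+ 36
    + (D *+ 12 + pw *+ 4 - pv *+ 3) *+ 3 + (pv *+ 3 - 2%:R) *+ 3 + (1 - pw *+ 3) *+ 4.
  by ring.
have : 0 <= (d *+ 36 - 1) *+ 2.
  by rewrite key; do 3!(apply: addr_ge0; last exact: mulrn_wge0); exact: mulrn_wge0.
by rewrite pmulrn_lge0 // subr_ge0.
Qed.

End InnerProduct.

Section Oracle.
Variables n m : nat.
Local Open Scope ring_scope.
Implicit Types (A B : adj_array n) (phi psi : qstate (qbasis n m)).

Lemma addIr_inj (c : 'I_n) : injective (fun b : 'I_n => addI b c).
Proof.
move=> a b /(congr1 val) /eqP; rewrite /= eqn_modDr !modn_small // => /eqP.
exact: val_inj.
Qed.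

Lemma qstep_inj A : injective (@qstep n m A).
Proof.
move=> [[[i j] b] w] [[[i' j'] b'] w'] /=.
case: ifP => Hj; case: ifP => Hj' [Ei Ej]; subst i' j'; rewrite ?Hj in Hj' => //.
- by move=> Eb ->; congr (_, _, _, _); apply: (@addIr_inj (nbr A i j)); apply: val_inj.
- by move=> -> ->.
Qed.

Lemma qstep_index A s : (@qstep n m A s).1.1 = s.1.1.
Proof. by case: s => [[[i j] b] w] /=; case: ifP. Qed.

Lemma oracleE A phi : qapply (@oracle n m A) phi =1 phi \o invF (@qstep_inj A).
Proof. exact: qapply_perm. Qed.

Lemma oracle_unitary A : unitary (@oracle n m A).
Proof. exact: unitary_perm (@qstep_inj A). Qed.

Definition mass phi (V : pred 'I_n) : C := \sum_(s | V s.1.1.1) `|phi s| ^+ 2.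

Lemma mass_cover_le (N c : nat) (V : 'I_N -> pred 'I_n) phi :
    (forall i, \sum_(k < N) V k i <= c)%N ->
  \sum_(k < N) mass phi (V k) <= c%:R * \sum_s `|phi s| ^+ 2.
Proof.
move=> V_cover; under eq_bigr do rewrite /mass big_mkcond /=.
rewrite exchange_big mulr_sumr; apply: ler_sum => s _ /=.
rewrite (eq_bigr (fun k => (V k s.1.1.1)%:R * `|phi s| ^+ 2)) => [|k _]; last first.
  by case: (V k _); rewrite ?mul1r ?mul0r.
by rewrite -mulr_suml -natr_sum ler_wpM2r ?exprn_ge0 // ler_nat.
Qed.

Definition agree_off (V : pred 'I_n) A B : Prop :=
  deg A = deg B /\
  forall i (j : 'I_n), (j < deg A i)%N -> ~~ V i -> nbr A i j = nbr B i j.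

Lemma qstep_agree V A B s :
  agree_off V A B -> ~~ V s.1.1.1 -> @qstep n m A s = qstep B s.
Proof.
case=> Edeg Enbr; case: s => [[[i j] b] w] /= Vi.
by rewrite -Edeg; case: ifP => // Hj; rewrite Enbr.
Qed.

Lemma oracle_qdot_le V A B phi psi : agree_off V A B ->
  `|qdot (qapply (oracle A) phi) (qapply (oracle B) psi) - qdot phi psi|
    <= mass phi V + mass psi V.
Proof.
move=> AB; pose h t := invF (@qstep_inj B) (qstep A t).
have h_inj : injective h.
  by move=> t1 t2 /(congr1 (qstep B)); rewrite !f_invF => /qstep_inj.
have h_index t : (h t).1.1 = t.1.1.
  by rewrite -[LHS](qstep_index B) /h f_invF qstep_index.
have -> : qdot (qapply (oracle A) phi) (qapply (oracle B) psi) = qdot phi (psi \o h).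
  rewrite /qdot (reindex_inj (@qstep_inj A)); apply: eq_bigr => t _.
  by rewrite !oracleE /= invF_f.
rewrite /mass -big_split; apply: qdot_shift_le => // t.
  by rewrite h_index.
by move=> Vt; rewrite /h (qstep_agree AB Vt) invF_f.
Qed.

End Oracle.

Definition separates n (P : adj_array n -> Prop) (A B : adj_array n) : Prop :=
  (P A /\ ~ P B) \/ (~ P A /\ P B).

Section Adversary.
Variables (n T m : nat) (Q : qalg n T m).
Local Open Scope ring_scope.
Hypothesis Q_wf : qalg_wf Q.

Lemma qdot_run A t : (t <= T)%N -> qdot (run Q A t) (run Q A t) = 1.
Proof.
case: Q_wf => init_unit U_unitary; elim: t => [|t IH] Ht /=.
  by rewrite qdot_unitary ?qdotvv; [apply: init_unit | apply: U_unitary].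
rewrite qdot_unitary; last exact: U_unitary.
by rewrite qdot_unitary ?IH 1?ltnW //; apply: oracle_unitary.
Qed.

Lemma run_qdot_le V A B t : (t <= T)%N -> agree_off V A B ->
  `|1 - qdot (run Q A t) (run Q B t)|
    <= \sum_(k < t) (mass (run Q A k) V + mass (run Q B k) V).
Proof.
move=> + AB; case: (AB) => Edeg _; elim: t => [|t IH] Ht.
  by rewrite big_ord0 /= Edeg -/(run Q B 0) qdot_run // subrr normr0.
rewrite big_ord_recr /=; set d := qdot (run Q A t) (run Q B t).
rewrite Edeg qdot_unitary; last by case: Q_wf => _; apply.
rewrite (_ : 1 - _ = (1 - d) - (qdot (qapply (oracle A) (run Q A t))
    (qapply (oracle B) (run Q B t)) - d)); last by ring.
by apply: le_trans (ler_normB _ _) _; rewrite lerD ?IH ?oracle_qdot_le // ltnW.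
Qed.

Lemma separated_run_qdot (P : adj_array n -> Prop) A B :
    decides Q P -> valid_array A -> valid_array B -> deg A = deg B ->
    separates P A B ->
  1 <= `|1 - qdot (run Q A T) (run Q B T)| *+ 36.
Proof.
move=> Qdec vA vB Edeg.
have [accA rejA] := Qdec A vA; have [accB rejB] := Qdec B vB.
rewrite /acc_prob -Edeg in accB rejB.
have [A1 B1] := (qdot_run A (leqnn T), qdot_run B (leqnn T)).
case=> [[PA PB]|[PA PB]]; first exact: distinguish_qdot A1 B1 (accA PA) (rejB PB).
have := distinguish_qdot B1 A1 (accB PB) (rejA PA).
by rewrite qdotC -[1]conjC1 -rmorphB /= norm_conjC conjC1.
Qed.

Lemma adversary_bound (P : adj_array n -> Prop) (I : finType)
    (x y : I -> adj_array n) (V : I -> pred 'I_n) :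
    decides Q P -> (forall q, valid_array (x q) /\ valid_array (y q)) ->
    (forall q, separates P (x q) (y q)) -> (forall q, agree_off (V q) (x q) (y q)) ->
  #|I|%:R <= (\sum_(t < T) \sum_q
               (mass (run Q (x q) t) (V q) + mass (run Q (y q) t) (V q))) *+ 36.
Proof.
move=> Qdec valid sep agree; rewrite exchange_big -sumrMnl -sumr_const.
apply: ler_sum => q _; have [vx vy] := valid q.
have Edeg : deg (x q) = deg (y q) by case: (agree q).
apply: le_trans (separated_run_qdot Qdec vx vy Edeg (sep q)) _.
by rewrite ler_pMn2r // run_qdot_le.
Qed.

End Adversary.

Section GraphMaps.
Variables (n n2 : nat) (A : adj_array n) (B : adj_array n2) (f : 'I_n -> 'I_n2).
Hypothesis f_hom : forall u v, adj A u v -> adj B (f u) (f v).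

Lemma bipartite_hom : bipartite B -> bipartite A.
Proof. by case=> col col_ok; exists (col \o f) => u v /f_hom /col_ok. Qed.

Lemma has_cycle_hom : injective f -> has_cycle A -> has_cycle B.
Proof.
move=> f_inj [s [s_size s_uniq s_cycle]]; exists (map f s).
by rewrite size_map map_inj_uniq // cycle_map (sub_cycle f_hom).
Qed.

End GraphMaps.

Lemma path_alternate (T : Type) (e : rel T) (col : T -> bool) x s :
    (forall u v, e u v -> col u != col v) -> path e x s ->
  col (last x s) = col x (+) odd (size s).
Proof.
move=> col_ok; elim: s x => [|y s IH] x /=; first by rewrite addbF.
case/andP=> /col_ok exy /IH ->.
by case: (col x) (col y) (odd (size s)) exy => [] [] [].
Qed.

Lemma odd_cycle_not_bipartite n (A : adj_array n) s :
  path.cycle (adj A) s -> odd (size s) -> ~ bipartite A.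
Proof.
case: s => [//|x s] /= s_cycle s_odd [col col_ok].
have := path_alternate col_ok s_cycle.
by rewrite last_rcons size_rcons /= s_odd; case: (col x).
Qed.

Section Relabel.
Variable n : nat.
Implicit Types (A B : adj_array n) (pi rho : {perm 'I_n}).
Local Open Scope group_scope.

Definition relabel pi A : adj_array n :=
  AdjArray (fun u => deg A (pi^-1 u)) (fun u j => pi (nbr A (pi^-1 u) j)).

Lemma adj_relabel pi A u v : adj (relabel pi A) u v = adj A (pi^-1 u) (pi^-1 v).
Proof.
by apply: eq_existsb => j; rewrite /= (can2_eq (permK pi) (permKV pi)).
Qed.

Lemma relabelM pi rho A : relabel (pi * rho) A = relabel rho (relabel pi A).
Proof.
rewrite /relabel /=; congr AdjArray; apply: functional_extensionality => u.
  by rewrite invMg permM.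
by apply: functional_extensionality => j; rewrite invMg !permM.
Qed.

Lemma valid_relabel pi A : valid_array A -> valid_array (relabel pi A).
Proof.
case=> deg_le nbr_inj adj_sym adj_irr; split => /=.
- by move=> u; apply: deg_le.
- by move=> u j k Hj Hk /perm_inj; apply: nbr_inj.
- by move=> u v; rewrite !adj_relabel; apply: adj_sym.
- by move=> u; rewrite adj_relabel.
Qed.

Lemma bipartite_relabel pi A : bipartite (relabel pi A) <-> bipartite A.
Proof.
split; [apply: (bipartite_hom (f := pi)) | apply: (bipartite_hom (f := pi^-1))];
  by move=> u v; rewrite adj_relabel ?permK.
Qed.

Lemma has_cycle_relabel pi A : has_cycle (relabel pi A) <-> has_cycle A.
Proof.
split; [apply: (has_cycle_hom (f := pi^-1)) | apply: (has_cycle_hom (f := pi))];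
  try exact: perm_inj; by move=> u v; rewrite adj_relabel ?permK.
Qed.

Lemma agree_off_relabel (V : pred 'I_n) pi A B : agree_off V A B ->
  agree_off [pred u | V (pi^-1 u)] (relabel pi A) (relabel pi B).
Proof.
case=> Edeg Enbr; split => /= [|u j Hj Vu]; first by rewrite Edeg.
by rewrite Enbr.
Qed.

End Relabel.

Section SuccessorArrays.
Variables (n' : nat) (pred succ : nat -> nat).
Hypotheses (n'_gt0 : 0 < n')
  (succ_mem : forall v, v < n' -> 0 < succ v <= n')
  (pred_mem : forall v, 0 < v <= n' -> pred v < n')
  (succK : forall v, v < n' -> pred (succ v) = v)
  (predK : forall v, 0 < v <= n' -> succ (pred v) = v).

Definition end_deg (v : nat) : nat := if (v == 0) || (v == n') then 1 else 2.

Definition succ_nbr (v j : nat) : nat :=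
  if (v == 0) || (j != 0) then succ v else pred v.

(* [succ] maps [0, n') bijectively onto (0, n'] with inverse [pred]: the array
   lists the neighbours [pred v] and [succ v] of each vertex, the endpoints 0
   and n' having only [succ 0] and [pred n'].  The graph is thus a path from 0
   to n' plus disjoint cycles. *)
Definition succ_array : adj_array n'.+1 :=
  AdjArray (fun v => end_deg v) (fun v j => inord (succ_nbr v j)).

Lemma succ_nbr_le v j : v <= n' -> j < end_deg v -> succ_nbr v j <= n'.
Proof.
rewrite /succ_nbr /end_deg => Hv; have := @succ_mem v; have := @pred_mem v.
by do 2 case: ifP; lia.
Qed.

Lemma adj_succ_arrayE (u v : 'I_n'.+1) :
  adj succ_array u v = (succ_nbr u 0 == v) || (1 < end_deg u) && (succ_nbr u 1 == v).
Proof.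
have nbrE j : j < end_deg u -> (inord (succ_nbr u j) == v :> 'I_n'.+1) = (succ_nbr u j == v).
  by move=> Hj; rewrite -val_eqE /= inordK // ltnS succ_nbr_le // -ltnS.
have deg_pos : 0 < end_deg u by rewrite /end_deg; case: ifP.
apply/existsP/idP => [[j /andP [Hj]] | ].
- rewrite /= nbrE //; case: j Hj => [[|[|j]] /= _] Hj E; rewrite ?E ?Hj ?orbT //.
  by move: Hj; rewrite /end_deg; case: ifP.
- case/orP => [E | /andP [Hdeg E]].
  + by exists ord0; rewrite /= deg_pos nbrE.
  + by exists (inord 1); rewrite /= inordK ?Hdeg ?nbrE //; lia.
Qed.

Lemma pred_eqE u v : v <= n' -> u <= n' ->
  (0 < u) && (pred u == v) = (v < n') && (succ v == u).
Proof.
move=> Hv Hu; apply/andP/andP => [[u_pos /eqP <-] | [v_lt /eqP <-]].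
  by rewrite predK ?pred_mem ?u_pos.
by rewrite succK // eqxx; case/andP: (succ_mem v_lt).
Qed.

Lemma adj_succ_array (u v : 'I_n'.+1) :
  adj succ_array u v = ((u < n') && (succ u == v)) || ((v < n') && (succ v == u)).
Proof.
have [Hu Hv] := (leq_ord u, leq_ord v).
rewrite adj_succ_arrayE -(pred_eqE Hv Hu) /succ_nbr /end_deg.
by repeat case: ifP; lia.
Qed.

Lemma valid_succ_array :
    (forall v, v < n' -> succ v != v) ->
    (forall v, 0 < v < n' -> pred v != succ v) ->
  valid_array succ_array.
Proof.
move=> succ_neq pred_neq_succ; split => /= [u | u j k Hj Hk | u v | u].
- by rewrite /end_deg; case: ifP.
- move/(congr1 val); rewrite /= !inordK ?ltnS ?succ_nbr_le ?(leq_ord u) //.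
  have := @pred_neq_succ u; have := leq_ord u; move: Hj Hk.
  by rewrite /succ_nbr /end_deg; repeat case: ifP; move=> *; apply: ord_inj; lia.
- by rewrite !adj_succ_array orbC.
- rewrite adj_succ_array orbb; apply/negP => /andP [u_lt].
  exact/negP/succ_neq.
Qed.

End SuccessorArrays.

Lemma cycle_iota (e : rel nat) m n :
  (forall i, m <= i < m + n -> e i i.+1) -> e (m + n) m -> path.cycle e (iota m n.+1).
Proof.
move=> step back; rewrite /= rcons_path; apply/andP; split.
  elim: n m step {back} => [|n IH] m step //=.
  rewrite step ?IH // => [i Hi|]; [apply: step|]; lia.
suff -> : last m (iota m.+1 n) = m + n by [].
by elim: n m {step back} => [|n IH] m /=; rewrite ?addn0 // IH addSnnS.
Qed.

Lemma sum_eq_shift (v c N : nat) : \sum_(i < N) (v == i + c) = (c <= v < N + c).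
Proof.
elim: N => [|N IH]; first by rewrite big_ord0; lia.
by rewrite big_ord_recr /= IH; lia.
Qed.

Section Construction.
Variables n' L : nat.
Hypotheses (L_gt2 : 2 < L) (L2_le : L + L <= n').

Local Notation vertex := 'I_n'.+1.

Definition xarray := succ_array n' predn succn.

Definition ysucc v := if v == 0 then L.+1 else if v == L then 1 else v.+1.
Definition ypred v := if v == L.+1 then 0 else if v == 1 then L else v.-1.
Definition yarray := succ_array n' ypred ysucc.

Variant ysucc_spec v : nat -> Type :=
  | YsuccPath of v = 0 : ysucc_spec v L.+1
  | YsuccCycle of v = L : ysucc_spec v 1
  | YsuccStep of v != 0 & v != L : ysucc_spec v v.+1.

Lemma ysuccP v : ysucc_spec v (ysucc v).
Proof.
rewrite /ysucc; case: eqP => [|/eqP v0]; first exact: YsuccPath.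
by case: eqP => [|/eqP vL]; [exact: YsuccCycle | exact: YsuccStep].
Qed.

Variant ypred_spec v : nat -> Type :=
  | YpredPath of v = L.+1 : ypred_spec v 0
  | YpredCycle of v = 1 : ypred_spec v L
  | YpredStep of v != L.+1 & v != 1 : ypred_spec v v.-1.

Lemma ypredP v : ypred_spec v (ypred v).
Proof.
rewrite /ypred; case: eqP => [|/eqP vL]; first exact: YpredPath.
by case: eqP => [|/eqP v1]; [exact: YpredCycle | exact: YpredStep].
Qed.

Lemma valid_xarray : valid_array xarray.
Proof. by apply: valid_succ_array => *; lia. Qed.

Lemma ysucc_bij :
  [/\ forall v, v < n' -> 0 < ysucc v <= n', forall v, 0 < v <= n' -> ypred v < n',
       forall v, v < n' -> ypred (ysucc v) = v & forall v, 0 < v <= n' -> ysucc (ypred v) = v].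
Proof.
split=> v *; first by case: ysuccP; lia.
- by case: ypredP; lia.
- by case: (ysuccP v) => *; case: ypredP; lia.
- by case: (ypredP v) => *; case: ysuccP; lia.
Qed.

Lemma valid_yarray : valid_array yarray.
Proof.
have [? ? ? ?] := ysucc_bij; apply: valid_succ_array => // [|v|v] *; try lia.
- by case: ysuccP; lia.
- by case: (ypredP v) => *; case: ysuccP; lia.
Qed.

Lemma adj_yarray (u v : vertex) :
  adj yarray u v = ((u < n') && (ysucc u == v)) || ((v < n') && (ysucc v == u)).
Proof. have [? ? ? ?] := ysucc_bij; rewrite adj_succ_array //; lia. Qed.

Lemma adj_xarray (u v : vertex) : adj xarray u v = (u.+1 == v) || (v.+1 == u).
Proof.
rewrite adj_succ_array => *; try lia.
by have := leq_ord u; have := leq_ord v; lia.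
Qed.

Lemma xarray_bipartite : bipartite xarray.
Proof.
exists (fun u : vertex => odd u) => u v.
by rewrite adj_xarray => /orP [] /eqP <- /=; case: (odd _).
Qed.

Lemma xarray_acyclic : ~ has_cycle xarray.
Proof.
case=> s [s_size s_uniq s_cycle].
have [x0 x0s] : exists x0, x0 \in s.
  by case: s s_size {s_uniq s_cycle} => [|x0 ?] //; exists x0; rewrite mem_head.
case: (arg_maxnP (fun u : vertex => val u) x0s) => x /rot_to [i s' def_s] x_max.
have x_ge u : u \in x :: s' -> u <= x by rewrite -def_s mem_rot; apply: x_max.
move: s_size s_uniq s_cycle; rewrite -(size_rot i) -(rot_uniq i) -(rot_cycle i) def_s.
case: s' {def_s} x_ge => [|a [|b r]] //= x_ge _ /andP [_ /andP [a_notin _]].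
case/andP=> xa /andP [_]; rewrite rcons_path => /andP [_ zx].
have ax : a <= x by apply: x_ge; rewrite !inE eqxx orbT.
have zx' : last b r <= x by apply/x_ge/mem_behead/mem_behead/mem_last.
set z := last b r in zx zx' *.
have az : a = z.
  by move: xa zx; rewrite !adj_xarray => *; apply: ord_inj; lia.
by move: a_notin; rewrite az mem_last.
Qed.

Definition ycycle : seq vertex := [seq inord i | i <- iota 1 L].

Lemma yarray_cycle : path.cycle (adj yarray) ycycle.
Proof.
have adjE i j : i <= n' -> j <= n' ->
    adj yarray (inord i) (inord j) = (i < n') && (ysucc i == j) || (j < n') && (ysucc j == i).
  by move=> Hi Hj; rewrite adj_yarray !inordK.
rewrite cycle_map -[X in iota _ X](prednK (ltnW (ltnW L_gt2))).
by apply: cycle_iota => [i Hi|]; rewrite /= adjE; try lia; case: ysuccP; lia.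
Qed.

Lemma size_ycycle : size ycycle = L.
Proof. by rewrite size_map size_iota. Qed.

Lemma yarray_has_cycle : has_cycle yarray.
Proof.
exists ycycle; split; rewrite ?size_ycycle ?yarray_cycle //.
rewrite map_inj_in_uniq ?iota_uniq // => i j; rewrite !mem_iota => Hi Hj.
by move/(congr1 val); rewrite /= !inordK; lia.
Qed.

Lemma yarray_not_bipartite : odd L -> ~ bipartite yarray.
Proof. by move=> L_odd; apply: odd_cycle_not_bipartite yarray_cycle _; rewrite size_ycycle. Qed.

Definition swap k v := if 0 < v <= k then v + L else if L < v <= L + k then v - L else v.
Definition cut k v := [|| v == k, v == k.+1, v == k + L | v == (k + L).+1].

Section Swap.
Variable k : nat.
Hypotheses (k_gt0 : 0 < k) (k_ltL : k < L).

Variant swap_spec v : nat -> Type :=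
  | SwapLow of 0 < v <= k : swap_spec v (v + L)
  | SwapHigh of L < v <= L + k : swap_spec v (v - L)
  | SwapFix of ~~ (0 < v <= k) & ~~ (L < v <= L + k) : swap_spec v v.

Lemma swapP v : swap_spec v (swap k v).
Proof.
rewrite /swap; case: ifP => [|/negbT low]; first exact: SwapLow.
by case: ifP => [|/negbT high]; [exact: SwapHigh | exact: SwapFix].
Qed.

Lemma swapK v : swap k (swap k v) = v.
Proof. by case: (swapP v) => *; case: swapP; lia. Qed.

Lemma swap_le v : v <= n' -> swap k v <= n'.
Proof. by case: swapP; lia. Qed.

Lemma swap_eq0 v : (swap k v == 0) = (v == 0).
Proof. by case: swapP; lia. Qed.

Lemma end_deg_swap v : v <= n' -> end_deg n' (swap k v) = end_deg n' v.
Proof. by rewrite /end_deg; case: swapP; repeat case: ifP; lia. Qed.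

Lemma cut_swap v : cut k (swap k v) = cut k v.
Proof. by rewrite /cut; case: swapP; lia. Qed.

Lemma swap_ysucc v : v < n' -> ~~ cut k v -> swap k (ysucc (swap k v)) = v.+1.
Proof. by rewrite /cut; case: (swapP v) => *; case: ysuccP => *; case: swapP; lia. Qed.

Lemma swap_ypred v : 0 < v <= n' -> ~~ cut k v -> swap k (ypred (swap k v)) = v.-1.
Proof. by rewrite /cut; case: (swapP v) => *; case: ypredP => *; case: swapP; lia. Qed.

Lemma swap_succ_nbr v j : v <= n' -> j < end_deg n' v -> ~~ cut k v ->
  swap k (succ_nbr ypred ysucc (swap k v) j) = succ_nbr predn succn v j.
Proof.
move=> Hv Hj Vv; rewrite /succ_nbr swap_eq0.
case: ifP => branch; [rewrite swap_ysucc | rewrite swap_ypred] => //;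
  move: Hj; rewrite /end_deg; case: ifP; lia.
Qed.

End Swap.

Section Crossing.
Variable i : 'I_L.-1.

Lemma cut_index_bounds : 0 < i.+1 < L.
Proof. by have := ltn_ord i; lia. Qed.

Definition swap_ord (v : vertex) : vertex := inord (swap i.+1 v).

Lemma swap_ordE v : swap_ord v = swap i.+1 v :> nat.
Proof.
by case/andP: cut_index_bounds => *; rewrite /= inordK // ltnS swap_le ?(leq_ord v).
Qed.

Lemma swap_ordK : involutive swap_ord.
Proof.
case/andP: cut_index_bounds => *.
by move=> v; apply: ord_inj; rewrite !swap_ordE swapK.
Qed.

Definition tau : {perm vertex} := perm (can_inj swap_ordK).

Lemma tauE v : tau v = swap i.+1 v :> nat.
Proof. by rewrite permE swap_ordE. Qed.

Lemma tauV : (tau^-1)%g = tau.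
Proof.
apply/permP => v; apply: (@perm_inj _ tau); rewrite permKV.
by apply: ord_inj; rewrite !tauE; case/andP: cut_index_bounds => *; rewrite swapK.
Qed.

Definition ycross := relabel tau yarray.

Lemma agree_off_cross : agree_off (fun v : vertex => cut i.+1 v) xarray ycross.
Proof.
case/andP: cut_index_bounds => *; split.
  apply: functional_extensionality => v /=.
  by rewrite tauV tauE end_deg_swap ?(leq_ord v).
move=> v j /= Hj Vv; apply: ord_inj; rewrite tauV !tauE /= !inordK.
- by rewrite swap_succ_nbr ?(leq_ord v).
- have [? ? ? ?] := ysucc_bij; rewrite ltnS succ_nbr_le //; first lia.
    by rewrite swap_le ?(leq_ord v).
  by rewrite end_deg_swap ?(leq_ord v).
- by rewrite ltnS succ_nbr_le ?(leq_ord v) // => *; lia.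
Qed.

End Crossing.

Lemma sum_cut_le v : (\sum_(i < L.-1) cut i.+1 v <= 4)%N.
Proof.
apply: (@leq_trans (\sum_(i < L.-1)
   ((v == i + 1) + (v == i + 2) + (v == i + L.+1) + (v == i + L.+2)))).
  by apply: leq_sum => i _; rewrite /cut; lia.
by rewrite !big_split /= !sum_eq_shift; lia.
Qed.

Section LowerBound.
Variables (T m : nat) (Q : qalg n'.+1 T m).
Hypothesis Q_wf : qalg_wf Q.
Local Open Scope ring_scope.

Definition cut_at (pi : {perm vertex}) (i : 'I_L.-1) : pred vertex :=
  [pred u | cut i.+1 ((pi^-1)%g u)].

Lemma sum_mass_relabel_le A t : (t <= T)%N ->
  \sum_(pi : {perm vertex}) \sum_i mass (run Q (relabel pi A) t) (cut_at pi i)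
    <= (4 * #|{perm vertex}|)%:R.
Proof.
move=> Ht; rewrite natrM mulr_natr -sumr_const; apply: ler_sum => pi _.
apply: le_trans (mass_cover_le _ (fun v => sum_cut_le ((pi^-1)%g v))) _.
by rewrite -qdotvv qdot_run // mulr1.
Qed.

Lemma sum_mass_cross (i : 'I_L.-1) t :
  \sum_(pi : {perm vertex}) mass (run Q (relabel pi (ycross i)) t) (cut_at pi i)
    = \sum_(pi : {perm vertex}) mass (run Q (relabel pi yarray) t) (cut_at pi i).
Proof.
rewrite (reindex_inj (mulgI (tau i))) /=; apply: eq_bigr => rho _.
rewrite /ycross -relabelM mulgA -{1}tauV mulVg mul1g.
apply: eq_bigl => s; rewrite /cut_at /= invMg permM tauV tauE cut_swap //.
by case/andP: (cut_index_bounds i).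
Qed.

Definition xfamily (q : {perm vertex} * 'I_L.-1) := relabel q.1 xarray.
Definition yfamily (q : {perm vertex} * 'I_L.-1) := relabel q.1 (ycross q.2).

Lemma family_mass_le t : (t <= T)%N ->
  \sum_q (mass (run Q (xfamily q) t) (cut_at q.1 q.2)
          + mass (run Q (yfamily q) t) (cut_at q.1 q.2))
    <= (8 * #|{perm vertex}|)%:R.
Proof.
move=> Ht; rewrite big_split /= (mulnDl 4 4) natrD.
rewrite -(pair_bigA _ (fun pi i => mass (run Q (relabel pi xarray) t) (cut_at pi i))).
rewrite -(pair_bigA _ (fun pi i => mass (run Q (relabel pi (ycross i)) t) (cut_at pi i))).
rewrite /= [X in _ + X]exchange_big /=.
under [X in _ + X]eq_bigr do rewrite sum_mass_cross.
by rewrite [X in _ + X]exchange_big /= lerD ?sum_mass_relabel_le.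
Qed.

Lemma relabel_invariant_lower_bound (P : adj_array n'.+1 -> Prop) :
    (forall pi A, P (relabel pi A) <-> P A) ->
    (forall i, separates P xarray (ycross i)) ->
  decides Q P -> (L.-1 <= 288 * T)%N.
Proof.
move=> P_relabel P_sep Qdec.
have valid q : valid_array (xfamily q) /\ valid_array (yfamily q).
  by split; do ?apply: valid_relabel; [exact: valid_xarray | exact: valid_yarray].
have sep q : separates P (xfamily q) (yfamily q).
  have rel A : P (relabel q.1 A) <-> P A := P_relabel q.1 A.
  by case: (P_sep q.2) => [] [PA PB]; [left | right]; split; by [apply/rel | move/rel].
have agree q : agree_off (cut_at q.1 q.2) (xfamily q) (yfamily q).
  exact: (agree_off_relabel q.1 (agree_off_cross q.2)).
have := adversary_bound Q_wf Qdec valid sep agree.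
have family_le : \sum_(t < T) \sum_q
    (mass (run Q (xfamily q) t) (cut_at q.1 q.2)
     + mass (run Q (yfamily q) t) (cut_at q.1 q.2))
    <= (T * (8 * #|{perm vertex}|))%:R.
  rewrite natrM mulr_natl -[T in _ *+ T]card_ord -sumr_const.
  by apply: ler_sum => t _; rewrite family_mass_le // ltnW.
move/le_trans/(_ (ler_wMn2r 36 family_le)).
rewrite -[_ *+ 36]mulr_natr -natrM ler_nat card_prod card_ord => size_le.
have perm_pos : (0 < #|{perm vertex}|)%N by apply/card_gt0P; exists 1%g.
by rewrite -(leq_pmul2l perm_pos); apply: leq_trans size_le _; lia.
Qed.

Lemma bipartite_lower_bound : odd L -> decides Q (@bipartite _) -> (L.-1 <= 288 * T)%N.
Proof.
move=> L_odd; apply: relabel_invariant_lower_bound => [pi A | i].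
  exact: bipartite_relabel.
by left; rewrite bipartite_relabel; split; [exact: xarray_bipartite | exact: yarray_not_bipartite].
Qed.

Lemma has_cycle_lower_bound : decides Q (@has_cycle _) -> (L.-1 <= 288 * T)%N.
Proof.
apply: relabel_invariant_lower_bound => [pi A | i].
  exact: has_cycle_relabel.
by right; rewrite has_cycle_relabel; split; [exact: xarray_acyclic | exact: yarray_has_cycle].
Qed.

End LowerBound.

End Construction.

Lemma omega_n_of_odd_cycle_bound (P : forall n, adj_array n -> Prop) :
    (forall n' L T m (Q : qalg n'.+1 T m), 2 < L -> odd L -> L + L <= n' ->
       qalg_wf Q -> decides Q (@P n'.+1) -> L.-1 <= 288 * T) ->
  omega_n_lower_bound P.
Proof.
move=> bound; exists 582, 7 => [[//|n'] n_ge T m Q Q_wf Qdec].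
set L := ((n' - 2) %/ 4 * 2).+1.
have L_odd : odd L by rewrite /= oddM andbF.
have [L_gt2 L2_le] : 2 < L /\ L + L <= n' by split; lia.
by have := bound n' L T m Q L_gt2 L_odd L2_le Q_wf Qdec; lia.
Qed.

Theorem lemma3 :
  omega_n_lower_bound (@bipartite) /\ omega_n_lower_bound (@has_cycle).
Proof.
split; apply: omega_n_of_odd_cycle_bound => n' L T m Q L_gt2 L_odd L2_le Q_wf.
- exact: bipartite_lower_bound.
- exact: has_cycle_lower_bound.
Qed.
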